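(* Let $\delta$ be a positive integer and let $a_{\delta,i}$ be the coefficient of $x^i$ in $$p_\delta(x)=\left(\frac{1+\sqrt{1-4x}}{2}\right)^{\delta+1}+\left(\frac{1-\sqrt{1-4x}}{2}\right)^{\delta+1}$$ (so $a_{\delta,0}=1$). For $j\ge1$ let $\omega_j=\zeta(2j,\delta)$ (alternatively $\omega_j=\zeta(2j-1,\delta)$; the claim holds for either choice). Then for every integer $r$ with $1\le r\le\delta$, setting $\omega_0=\frac{r}{\delta+1}$, $$\sum_{0\le i\le r}\omega_{r-i}\,a_{\delta,i}=0.$$
   Context: For positive integers $m$ and $\delta$, a $\delta$-deviation set of size $m$ is a finite sequence $(\alpha_1,\dots,\alpha_\ell)$ of positive integers such that (i) $\sum_i\alpha_i=m$; (ii) $\big|\sum_i\alpha_{2i-1}-\sum_i\alpha_{2i}\big|\le 1$; (iii) $\big|\sum_{1\le i\le j}(-1)^{i-1}\alpha_i\big|\le\delta$ for every $j\ge1$; and $\zeta(m,\delta)$ is the number of $\delta$-deviation sets of size $m$. *)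

From HB Require Import structures.
From mathcomp Require Import all_boot all_order all_algebra.
Set Implicit Arguments. Unset Strict Implicit. Unset Printing Implicit Defensive.
Import Order.TTheory GRing.Theory Num.Theory.
Local Open Scope ring_scope.

(* Alternating partial sum  sum_{1<=i<=j} (-1)^(i-1) alpha_i  of the first j
   terms of s (0-indexed: s`_0 = alpha_1 carries sign +). *)
Definition alt_partial (s : seq nat) (j : nat) : int :=
  \sum_(i < j) (-1) ^+ i * (nth 0%N s i)%:Z.

Definition is_dev_set (m delta : nat) (s : seq nat) : bool :=
  [&& all (fun a => 0 < a)%N s,
      sumn s == m,
      (* |sum_i alpha_{2i-1} - sum_i alpha_{2i}| <= 1 ; 1-indexed odd = 0-indexed even *)
      `| (\sum_(i < size s | ~~ odd i) (nth 0%N s i)%:Z)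
         - (\sum_(i < size s | odd i) (nth 0%N s i)%:Z) | <= 1 &
      (* for every j >= 1 (beyond size s the partial sum is constant) *)
      [forall j : 'I_(size s), `| alt_partial s j.+1 | <= delta%:Z ] ].

(* Such a sequence
   has length <= m and entries <= m, so we count, for each length k <= m,
   the k-tuples with entries in 'I_(m.+1) forming a deviation set. *)
Definition zeta (m delta : nat) : nat :=
  (\sum_(k < m.+1)
     #|[set t : k.-tuple 'I_(m.+1) | is_dev_set m delta (map val t)]|)%N.

(* p_delta(x) = ((1+s)/2)^(d+1) + ((1-s)/2)^(d+1) with s = sqrt(1-4x).
   Binomial expansion: the odd powers of s cancel, so
   p_delta = 2^(-d) * sum_k C(d+1, 2k) (1-4x)^k, a polynomial in x. *)
Definition pdelta (d : nat) : {poly rat} :=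
  (2%:R ^- d) *: \sum_(k < d.+2) ('C(d.+1, k.*2))%:R *: (1 - 4%:R *: 'X) ^+ k.

Definition acoef (d i : nat) : rat := (pdelta d)`_i.

From HB Require Import structures.
From mathcomp Require Import all_boot all_order all_algebra.
From mathcomp Require Import ring zify.
Import Order.TTheory GRing.Theory Num.Theory.

Set Implicit Arguments.
Unset Strict Implicit.
Unset Printing Implicit Defensive.

(* For j <= delta the bound on the alternating partial sums follows from the
   other conditions, so a delta-deviation set of size 2j (resp. 2j-1) is a
   sequence of positive integers whose entries in odd and in even positions
   sum to j and j (resp. to j and j-1 in some order).  Peeling off the first
   entry gives a recursion solved by the hockey-stick identity, and both
   counts equal C(2j-1, j).
   Let v = x + v^2 be the Catalan series, u = 1 - v and s = 1 - 2v, so that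
   s^2 = 1 - 4x.  Then u and v are the roots of t^2 - t + x, hence
   p_delta = u^(delta+1) + v^(delta+1), and sum_(j>=1) C(2j-1, j) x^j = v / s.
   Multiplying (delta+1) p_delta v / s + x p_delta' by s and using x = u v and
   s v' = 1 leaves (delta+1) v^(delta+1), which vanishes modulo x^(delta+1);
   the coefficient of x^r is delta+1 times the claimed sum.  Power series are
   handled as polynomials modulo 'X^n. *)

Fixpoint parity_sums (s : seq nat) : nat * nat :=
  if s is x :: s' then (x + (parity_sums s').2, (parity_sums s').1) else (0, 0).

Lemma sumn_parity_sums s : sumn s = (parity_sums s).1 + (parity_sums s).2.
Proof. by elim: s => [|x s IH] //=; rewrite IH; lia. Qed.

Section AlternatingSums.
Local Open Scope ring_scope.

Lemma sum_nth_parity s :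
  \sum_(i < size s | ~~ odd i) (nth 0%N s i)%:Z = (parity_sums s).1 /\
  \sum_(i < size s | odd i) (nth 0%N s i)%:Z = (parity_sums s).2.
Proof.
rewrite [X in X = _ /\ _]big_mkcond [X in _ /\ X = _]big_mkcond /=.
elim: s => [|x s [IHe IHo]] /=; first by rewrite !big_ord0.
rewrite !big_ord_recl /= add0r PoszD -IHe -IHo; split; last by [].
by congr (_ + _); apply: eq_bigr => i _; rewrite negbK.
Qed.

Lemma alt_partial_cons x s j : alt_partial (x :: s) j.+1 = x%:Z - alt_partial s j.
Proof.
rewrite /alt_partial big_ord_recl /= mul1r -sumrN.
by congr (_ + _); apply: eq_bigr => i _; rewrite exprS mulN1r mulNr.
Qed.

Lemma alt_partial_bounds s j :
  - (parity_sums s).2%:Z <= alt_partial s j <= (parity_sums s).1%:Z.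
Proof.
elim: s j => [|x s IH] [|j]; try by rewrite /alt_partial big_ord0 /=; lia.
  by rewrite /alt_partial big1 // => i _; rewrite nth_nil mulr0.
by rewrite alt_partial_cons /=; have := IH j; lia.
Qed.

Lemma is_dev_set_small m delta s : (m <= delta.*2)%N ->
  is_dev_set m delta s =
  [&& all (fun a => 0 < a)%N s, sumn s == m,
      ((parity_sums s).1 <= (parity_sums s).2.+1)%N
    & ((parity_sums s).2 <= (parity_sums s).1.+1)%N].
Proof.
move=> le_m2d; rewrite /is_dev_set; have [-> ->] := sum_nth_parity s.
case: (all _ _) => //=; case: eqP => //= /eqP; rewrite sumn_parity_sums => sum_m.
have -> : (`|(parity_sums s).1%:Z - (parity_sums s).2%:Z| <= 1) =
    ((parity_sums s).1 <= (parity_sums s).2.+1)%N && ((parity_sums s).2 <= (parity_sums s).1.+1)%N.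
  by rewrite ler_norml; apply/andP/andP => -[]; lia.
apply/andP/idP => [[] // | bal]; split=> //; apply/forallP => j; rewrite ler_norml.
have := alt_partial_bounds s j.+1; lia.
Qed.

End AlternatingSums.

Definition has_parity_sums a b (s : seq nat) : bool :=
  [&& all (fun x => 0 < x) s, (parity_sums s).1 == a & (parity_sums s).2 == b].

Lemma has_parity_sums_cons a b x s :
  has_parity_sums a b (x :: s) = (0 < x <= a) && has_parity_sums b (a - x) s.
Proof.
rewrite /has_parity_sums /=; case: (parity_sums s) => E O /=.
case: (0 < x); case: (all _ s) => //=; rewrite ?andbF //.
by apply/andP/and3P => [[/eqP ? /eqP ?] | [? /eqP ? /eqP ?]]; split; try apply/eqP; lia.
Qed.

Lemma dev_set_even j delta s : j <= delta ->
  is_dev_set j.*2 delta s = has_parity_sums j j s.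
Proof.
move=> le_jd; rewrite is_dev_set_small ?leq_double // /has_parity_sums sumn_parity_sums.
case: (all _ s) (parity_sums s) => [] [E O] //=.
by apply/and3P/andP => [[/eqP ? ? ?] | [/eqP ? /eqP ?]]; split; try apply/eqP; lia.
Qed.

Lemma dev_set_odd j delta s : 0 < j <= delta ->
  is_dev_set j.*2.-1 delta s = has_parity_sums j j.-1 s || has_parity_sums j.-1 j s.
Proof.
case/andP=> j_gt0 le_jd; rewrite is_dev_set_small; last by lia.
rewrite /has_parity_sums sumn_parity_sums.
case: (all _ s) (parity_sums s) => [] [E O] //=; apply/and3P/orP.
  by case=> /eqP ? ? ?; case: (leqP O E) => ?; [left | right]; apply/andP; split; apply/eqP; lia.
by case=> /andP[/eqP ? /eqP ?]; split; try apply/eqP; lia.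
Qed.

Lemma has_parity_sums_disjoint a b s :
  a != b -> ~~ (has_parity_sums a b s && has_parity_sums b a s).
Proof.
move=> /eqP neq_ab; apply/negP => /andP[/and3P[_ /eqP Ea _] /and3P[_ /eqP Eb _]].
by apply: neq_ab; rewrite -Ea.
Qed.

Definition count_tuples M k (P : pred (seq nat)) : nat :=
  \sum_(t : k.-tuple 'I_M) P (map val t).

Lemma card_tuples_count M k (P : pred (seq nat)) :
  #|[set t : k.-tuple 'I_M | P (map val t)]| = count_tuples M k P.
Proof. by rewrite -sum1_card big_mkcond; apply: eq_bigr => t _; rewrite inE; case: (P _). Qed.

Lemma eq_count_tuples M k (P Q : pred (seq nat)) :
  P =1 Q -> count_tuples M k P = count_tuples M k Q.
Proof. by move=> eqPQ; apply: eq_bigr => t _; rewrite eqPQ. Qed.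

Lemma count_tuples0 M P : count_tuples M 0 P = P [::].
Proof.
rewrite /count_tuples (eq_bigr (fun _ => nat_of_bool (P [::]))) => [|t _]; last by rewrite tuple0.
by rewrite sum_nat_const card_tuple expn0 mul1n.
Qed.

Lemma count_tuplesS M k P :
  count_tuples M k.+1 P = \sum_(x : 'I_M) count_tuples M k (fun s => P (val x :: s)).
Proof.
rewrite /count_tuples pair_big_dep /=.
rewrite (reindex (fun p : 'I_M * k.-tuple 'I_M => [tuple of p.1 :: p.2])) //=.
exists (fun t : k.+1.-tuple 'I_M => (thead t, [tuple of behead t])).
  by move=> [x t] _; congr pair; apply: val_inj.
by move=> [[|x s] hs] _; apply: val_inj.
Qed.

Lemma count_tuples_orb M k (P Q : pred (seq nat)) : (forall s, ~~ (P s && Q s)) ->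
  count_tuples M k (fun s => P s || Q s) = count_tuples M k P + count_tuples M k Q.
Proof.
move=> PQ0; rewrite /count_tuples -big_split /=; apply: eq_bigr => t _.
by move: (PQ0 (map val t)); case: (P _); case: (Q _).
Qed.

Definition count_parity M K a b : nat :=
  \sum_(k < K) count_tuples M k (has_parity_sums a b).

Lemma count_parityS M K a b : count_parity M K.+1 a b =
  ((a == 0) && (b == 0)) +
  \sum_(x < M) (if 0 < x <= a then count_parity M K b (a - x) else 0).
Proof.
rewrite /count_parity big_ord_recl count_tuples0; congr addn.
  by rewrite /has_parity_sums /= !(eq_sym 0).
rewrite (eq_bigr (fun k : 'I_K => \sum_(x < M)
   (if 0 < x <= a then count_tuples M k (has_parity_sums b (a - x)) else 0))).
  rewrite exchange_big; apply: eq_bigr => x _.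
  by case: ifP => // _; rewrite big1.
move=> k _; rewrite count_tuplesS; apply: eq_bigr => x _.
rewrite (eq_count_tuples _ _ (has_parity_sums_cons a b x)).
by case: ifP => //= _; rewrite /count_tuples big1.
Qed.

Definition parity_binomial a b : nat :=
  if a == 0 then nat_of_bool (b == 0) else 'C(a + b - 1, b).

Lemma sum_bin_diag c a : \sum_(y < a.+1) 'C(c + y, y) = 'C(c + a.+1, a).
Proof.
elim: a => [|a IH]; first by rewrite big_ord1 !bin0.
by rewrite big_ord_recr /= IH !addnS binS addnC.
Qed.

Lemma sum_parity_binomial b a :
  \sum_(y < a.+1) parity_binomial b y = parity_binomial a.+1 b.
Proof.
rewrite /parity_binomial /=; case: b => [|c] /=.
  by rewrite big_ord_recl big1 ?bin0.
rewrite (eq_bigr (fun y : 'I_a.+1 => 'C(c + y, y))) => [|y _]; last by rewrite addSn subn1.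
rewrite sum_bin_diag -bin_sub; last by lia.
by congr binomial; lia.
Qed.

Lemma count_parityE M K a b : a + b < M -> a + b < K ->
  count_parity M K a b = parity_binomial a b.
Proof.
elim: K a b => [//|K IH] a b ltM ltK; rewrite count_parityS.
pose g x := if 0 < x then parity_binomial b (a - x) else 0.
rewrite (eq_bigr (fun x : 'I_M => if x < a.+1 then g x else 0)) => [|x _]; last first.
  rewrite /g; case: (ltnP 0 x) => x_gt0 /=; last by rewrite if_same.
  by rewrite ltnS; case: ifP => // le_xa; apply: IH; lia.
rewrite -big_mkcond -(big_ord_widen _ g) ?big_ord_recl /g /=; last by lia.
case: a {ltM ltK g} => [|a]; first by rewrite big_ord0; case: b.
rewrite /= !add0n -sum_parity_binomial -(big_mkord xpredT) big_rev_mkord subn0.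
by apply: eq_bigr => i _; rewrite /bump add1n.
Qed.

Lemma zeta_even j delta : 0 < j <= delta -> zeta j.*2 delta = 'C(j.*2.-1, j).
Proof.
case/andP=> j_gt0 le_jd; rewrite /zeta.
under eq_bigr => k _
  do rewrite card_tuples_count (eq_count_tuples _ _ (fun s => dev_set_even s le_jd)).
rewrite -/(count_parity _ _ j j) count_parityE; try lia.
by rewrite /parity_binomial (negPf (lt0n_neq0 j_gt0)) addnn subn1.
Qed.

Lemma zeta_odd j delta : 0 < j <= delta -> zeta j.*2.-1 delta = 'C(j.*2.-1, j).
Proof.
move=> /[dup] /andP[j_gt0 _] hj; rewrite /zeta.
under eq_bigr => k _
  do rewrite card_tuples_count (eq_count_tuples _ _ (fun s => dev_set_odd s hj)).
have neq : j != j.-1 by rewrite neq_ltn ltn_predL j_gt0 orbT.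
under eq_bigr => k _
  do rewrite (count_tuples_orb _ _ (fun s => has_parity_sums_disjoint s neq)).
rewrite big_split /= -/(count_parity _ _ j j.-1) -/(count_parity _ _ j.-1 j).
rewrite !count_parityE; try lia.
case: j j_gt0 {hj neq} => [//|i] _; rewrite /parity_binomial /=.
have -> : i.+1 + i - 1 = i.*2 by lia.
have -> : i + i.+1 - 1 = i.*2 by lia.
by case: eqP => [-> //|_]; rewrite binS addnC.
Qed.

Local Open Scope ring_scope.

Section DivisibilityByXn.
Variable F : fieldType.
Implicit Types p q : {poly F}.

Lemma dvdp_XnP n p : reflect (forall i, (i < n)%N -> p`_i = 0) ('X^n %| p).
Proof.
apply: (iffP (dvdpP _ _)) => [[q ->] i lt_in | p_low].
  by rewrite coefMXn lt_in.
exists (drop_poly n p); rewrite -[LHS](poly_take_drop n) addrC.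
suff -> : take_poly n p = 0 by rewrite addr0.
by apply/polyP => i; rewrite coef_take_poly coef0; case: ifP => // /p_low.
Qed.

Lemma dvdp_Xn_deriv n p : 'X^(n.+1) %| p -> 'X^n %| p^`().
Proof.
move=> /dvdp_XnP p_low; apply/dvdp_XnP => i lt_in.
by rewrite coef_deriv p_low ?mul0rn.
Qed.

Lemma dvdp_Xn_mulr n p q : q`_0 != 0 -> ('X^n %| p * q) = ('X^n %| p).
Proof.
move=> q0; apply: Gauss_dvdpl; rewrite coprimep_expl // coprimep_sym.
by rewrite coprimepX rootE horner_coef0.
Qed.

Lemma dvdp_subrXX (d a b : {poly F}) k : d %| a - b -> d %| a ^+ k - b ^+ k.
Proof. by move=> dab; rewrite subrXX dvdp_mulr. Qed.

Lemma dvdp_mulrn (d p : {poly F}) k : d %| p -> d %| p *+ k.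
Proof. by move=> dp; rewrite -mulr_natr dvdp_mulr. Qed.

(* Iterating v := X + v^2 fixes one more coefficient at each step. *)
Lemma exists_catalan_root n : exists2 v : {poly F}, 'X %| v & 'X^n %| v - ('X + v ^+ 2).
Proof.
elim: n => [|n [v Xv hv]]; first by exists 0; rewrite ?dvdp0 // expr0 dvd1p.
exists ('X + v ^+ 2); first by rewrite dvdp_add ?dvdpp // dvdp_exp.
have -> : 'X + v ^+ 2 - ('X + ('X + v ^+ 2) ^+ 2) =
          (v - ('X + v ^+ 2)) * (v + ('X + v ^+ 2)) by ring.
by rewrite exprSr dvdp_mul // !dvdp_add ?dvdpp // dvdp_exp.
Qed.
End DivisibilityByXn.

Lemma dvdp_Xn_deriv_const (R : numFieldType) n (p : {poly R}) :
  'X^n %| p^`() -> 'X^(n.+1) %| p - (p`_0)%:P.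
Proof.
move=> /dvdp_XnP dp_low; apply/dvdp_XnP => -[|i] lt_in; rewrite coefB coefC //=.
  by rewrite subrr.
by have /eqP := dp_low i lt_in; rewrite coef_deriv mulrn_eq0 /= subr0 => /eqP.
Qed.

Lemma sum_pairs (R : nmodType) (f : nat -> R) m :
  \sum_(i < m.*2) f i = \sum_(k < m) (f k.*2 + f k.*2.+1).
Proof. by elim: m => [|m IH]; rewrite ?big_ord0 // doubleS !big_ord_recr /= IH addrA. Qed.

Lemma even_binomial (R : comPzRingType) (x : R) n :
  (1 + x) ^+ n + (1 - x) ^+ n = (\sum_(k < n.+1) x ^+ k.*2 *+ 'C(n, k.*2)) *+ 2.
Proof.
rewrite [1 + x]addrC [1 - x]addrC !exprD1n -big_split /=.
pose f i := (x ^+ i + (- x) ^+ i) *+ 'C(n, i).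
rewrite (eq_bigr (fun i : 'I__ => f i)) => [|i _]; last by rewrite /f mulrnDl.
rewrite (big_ord_widen n.+1.*2 f) ?big_mkcond /=; last by rewrite -addnn leq_addr.
rewrite (eq_bigr (fun i : 'I__ => f i)) => [|i _]; last first.
  by case: ltnP => // lt_ni; rewrite /f bin_small ?mulr0n.
rewrite sum_pairs -sumrMnl; apply: eq_bigr => k _.
have sqrN i : (- x) ^+ i.*2 = x ^+ i.*2 by rewrite -mul2n !exprM sqrrN.
by rewrite /f /= !exprS !sqrN mulNr subrr mul0rn addr0 -mulr2n mulrnAC.
Qed.

Lemma central_bin_pred j : (0 < j)%N -> 'C(j.*2, j) = ('C(j.*2.-1, j) * 2)%N.
Proof.
case: j => [//|j] _; rewrite doubleS /= binS.
have -> : 'C(j.*2.+1, j) = 'C(j.*2.+1, j.+1) by rewrite -bin_sub; [congr 'C(_, _) | ]; lia.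
lia.
Qed.

Lemma central_binS i : (i.+1 * 'C(i.+1.*2, i.+1) = (i.*2.+1 * 2) * 'C(i.*2, i))%N.
Proof.
have := mul_bin_diag i.+1.*2 i; have := mul_bin_diag i.*2.+1 i.
have -> : 'C(i.*2.+1, i.+1) = 'C(i.*2.+1, i) by rewrite -bin_sub; [congr 'C(_, _) | ]; lia.
rewrite doubleS /=; lia.
Qed.

Section CentralBinomials.
Variable R : numFieldType.

Definition central_binomials n : {poly R} := \poly_(j < n) 'C(j.*2, j)%:R.

Definition half_central_binomials n : {poly R} :=
  \poly_(j < n) (if j == 0%N then 0 else 'C(j.*2.-1, j)%:R).

Lemma central_binomialsE n :
  central_binomials n.+1 = 1 + half_central_binomials n.+1 *+ 2.
Proof.
apply/polyP => -[|j]; rewrite coefD coefMn coef1 !coef_poly /=.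
  by rewrite mul0rn addr0.
rewrite add0r; case: (j.+1 < n.+1)%N; last by rewrite mul0rn.
by rewrite central_bin_pred // -mulrnA.
Qed.

Lemma central_binomials_ode n :
  'X^n %| (1 - 'X *+ 4) * (central_binomials n.+1)^`() - central_binomials n.+1 *+ 2.
Proof.
apply/dvdp_XnP => i lt_in.
rewrite mulrBl mul1r mulrnAl !coefB coefMn coefXM !coef_deriv coefMn !coef_poly.
rewrite !ltnS lt_in (ltnW lt_in); case: i lt_in => [|i] lt_in /=.
  by apply/eqP; rewrite mul0rn subr0 subr_eq0 -!mulrnA eqr_nat.
apply/eqP; rewrite (ltnW lt_in) -!mulrnA -addrA -opprD -natrD subr_eq0 eqr_nat.
by apply/eqP; have := central_binS i.+1; lia.
Qed.
End CentralBinomials.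

Section CatalanSeries.
Variables (R : numFieldType) (n : nat) (v : {poly R}).
Hypotheses (Xv : 'X %| v) (hv : 'X^(n.+2) %| v - ('X + v ^+ 2)).

Local Notation u := (1 - v).
Local Notation s := (1 - v *+ 2).
Local Notation e := (v - ('X + v ^+ 2)).

Let hv1 : 'X^(n.+1) %| e := dvdp_trans (dvdp_exp2l _ (leqnSn _)) hv.

Let s_coef0 : s`_0 = 1.
Proof.
have /dvdp_XnP v0 : 'X^1 %| v by rewrite expr1.
by rewrite coefB coefMn coef1 v0 // mul0rn subr0.
Qed.

Let s0 : s`_0 != 0. Proof. by rewrite s_coef0 oner_neq0. Qed.

Lemma catalan_deriv : 'X^(n.+1) %| s * v^`() - 1.
Proof.
have -> : s * v^`() - 1 = e^`() by rewrite derivB derivD derivX deriv_exp /=; ring.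
exact: dvdp_Xn_deriv.
Qed.

Lemma central_binomials_inv : 'X^(n.+2) %| central_binomials R n.+2 * s - 1.
Proof.
set w := central_binomials R n.+2; set z := w * s.
have z0 : z`_0 = 1.
  by rewrite coef0M coef_poly /= s_coef0 mulr1.
suff : 'X^(n.+1) %| z^`() by move/dvdp_Xn_deriv_const; rewrite z0.
(* From (1 - 4X) w' = 2 w, s^2 = 1 - 4X and s v' = 1: z' s^2 = 0 up to the defects. *)
rewrite -(dvdp_Xn_mulr _ _ s0) -(dvdp_Xn_mulr _ _ s0).
have ds : s^`() = - (v^`() *+ 2) by rewrite derivB derivMn -polyC1 derivC sub0r.
have -> : z^`() * s * s = s * ((1 - 'X *+ 4) * w^`() - w *+ 2)
    - e * (s * w^`()) * 4%:R - (s * v^`() - 1) * (w * s) * 2%:R.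
  by rewrite /z derivM ds; ring.
apply: dvdp_sub; first apply: dvdp_sub.
- exact/dvdp_mull/central_binomials_ode.
- exact/dvdp_mulr/dvdp_mulr.
- exact/dvdp_mulr/dvdp_mulr/catalan_deriv.
Qed.

Lemma half_central_binomials_mul :
  'X^(n.+2) %| s * half_central_binomials R n.+2 - v.
Proof.
have two0 : (2%:R : {poly R})`_0 != 0 by rewrite coefMn coef1 pnatr_eq0.
rewrite -(dvdp_Xn_mulr _ _ two0).
have -> : (s * half_central_binomials R n.+2 - v) * 2%:R =
          central_binomials R n.+2 * s - 1.
  by rewrite central_binomialsE; ring.
exact: central_binomials_inv.
Qed.

Local Notation P := (u ^+ n.+1 + v ^+ n.+1).

Lemma catalan_power_ode :
  'X^(n.+1) %| (P * half_central_binomials R n.+2) *+ n.+1 + 'X * P^`().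
Proof.
set W := half_central_binomials R n.+2.
rewrite -(dvdp_Xn_mulr _ _ s0).
have dP : P^`() = (v ^+ n - u ^+ n) * v^`() *+ n.+1.
  by rewrite derivD !deriv_exp derivB -polyC1 derivC /=; ring.
(* With s W = v, X = u v and s v' = 1 the main terms collapse to
   (n+1) v^(n+1) because u + v = 1; the other terms are multiples of defects. *)
have -> : ((P * W) *+ n.+1 + 'X * P^`()) * s =
  ((s * W - v) * P + u * v * (v ^+ n - u ^+ n) * (s * v^`() - 1) + v ^+ n.+1)
    * n.+1%:R - e * (s * P^`()).
  rewrite dP !exprS; move: (u ^+ n) (v ^+ n) => A B; ring.
apply: dvdp_sub; last exact/dvdp_mulr/hv1.
apply/dvdp_mulr/dvdp_add; first apply: dvdp_add.
- exact/dvdp_mulr/(dvdp_trans (dvdp_exp2l _ (leqnSn _)) half_central_binomials_mul).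
- exact/dvdp_mull/catalan_deriv.
- exact: dvdp_exp2r.
Qed.
End CatalanSeries.

Lemma pdelta_roots (u v : {poly rat}) d N : u + v = 1 -> 'X^N %| u * v - 'X ->
  'X^N %| pdelta d - (u ^+ d.+1 + v ^+ d.+1).
Proof.
move=> huv uvX; set s := u - v.
have ev : v = 1 - u by rewrite -huv addrC addKr.
have hs : 'X^N %| (1 - 'X *+ 4) - s ^+ 2.
  have -> : (1 - 'X *+ 4) - s ^+ 2 = (u * v - 'X) * 4%:R.
    by rewrite /s ev; ring.
  exact: dvdp_mulr.
have two_n0 : ((2 ^ d.+1)%:R : {poly rat})`_0 != 0.
  by rewrite coefMn coef1 pnatr_eq0 expn_eq0.
rewrite -(dvdp_Xn_mulr _ _ two_n0) mulr_natr mulrnBl mulrnDl -!exprMn_n.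
have -> : u *+ 2 = 1 + s by rewrite /s ev; ring.
have -> : v *+ 2 = 1 - s by rewrite /s ev; ring.
rewrite even_binomial /pdelta expnS mulnC mulrnA -mulrnBl.
rewrite -[_ *+ 2 ^ d]scaler_nat scalerA natrX mulfV ?expf_neq0 // scale1r -sumrB.
apply/dvdp_mulrn/(big_ind (fun p => 'X^N %| p)) => [|p q|k _]; first exact: dvdp0.
  exact: dvdp_add.
by rewrite !scaler_nat -mul2n exprM -mulrnBl dvdp_mulrn ?dvdp_subrXX.
Qed.

Lemma pdelta_ode d :
  'X^(d.+1) %| (pdelta d * half_central_binomials rat d.+2) *+ d.+1 + 'X * (pdelta d)^`().
Proof.
have [v Xv hv] := exists_catalan_root rat d.+2.
set W := half_central_binomials rat d.+2; set P := (1 - v) ^+ d.+1 + v ^+ d.+1.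
have hp : 'X^(d.+2) %| pdelta d - P.
  apply: pdelta_roots; first by rewrite subrK.
  by rewrite (_ : _ - _ = v - ('X + v ^+ 2)) //; ring.
have -> : (pdelta d * W) *+ d.+1 + 'X * (pdelta d)^`() =
    ((P * W) *+ d.+1 + 'X * P^`()) +
    (((pdelta d - P) * W) *+ d.+1 + 'X * (pdelta d - P)^`()).
  by rewrite derivB; ring.
apply: dvdp_add; first exact: catalan_power_ode.
apply: dvdp_add; last exact/dvdp_mull/dvdp_Xn_deriv.
exact/dvdp_mulrn/dvdp_mulr/(dvdp_trans (dvdp_exp2l _ (leqnSn _)) hp).
Qed.

Lemma acoef_recurrence d r : (0 < r <= d)%N ->
  r%:R / d.+1%:R * acoef d r + \sum_(i < r) 'C((r - i).*2.-1, r - i)%:R * acoef d i = 0.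
Proof.
case/andP=> r_gt0 le_rd; have /dvdp_XnP/(_ r) := pdelta_ode d; rewrite ltnS => /(_ le_rd).
rewrite coefD coefMn coefXM (negbTE (lt0n_neq0 r_gt0)) coef_deriv prednK //.
rewrite coefM big_ord_recr /= subnn coef_poly /= mulr0 addr0.
rewrite (eq_bigr (fun i : 'I_r => 'C((r - i).*2.-1, r - i)%:R * acoef d i)) => [h|i _].
  have nz : d.+1%:R != 0 :> rat by rewrite pnatr_eq0.
  apply: (mulfI nz); rewrite mulr0 -[X in _ = X]h /acoef.
  by rewrite mulrDr mulrA mulrCA mulfV // mulr1 !mulr_natl addrC.
have := ltn_ord i; rewrite coef_poly /acoef => lt_ir.
by rewrite ifT ?ifF 1?mulrC //; lia.
Qed.

Theorem corollary2 (delta r : nat) (hdelta : (1 <= delta)%N)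
    (hr1 : (1 <= r)%N) (hr2 : (r <= delta)%N) :
  (let omega j : rat :=
     if j == 0%N then r%:R / (delta.+1)%:R else (zeta (j.*2) delta)%:R in
   \sum_(i < r.+1) omega (r - i)%N * acoef delta i = 0)
  /\
  (let omega j : rat :=
     if j == 0%N then r%:R / (delta.+1)%:R else (zeta (j.*2.-1) delta)%:R in
   \sum_(i < r.+1) omega (r - i)%N * acoef delta i = 0).
Proof.
have recurrence (z : nat -> nat) :
    (forall j, (0 < j <= delta)%N -> z j = 'C(j.*2.-1, j)) ->
    \sum_(i < r.+1) (if (r - i)%N == 0%N then r%:R / (delta.+1)%:R
                     else (z (r - i)%N)%:R) * acoef delta i = 0.
  move=> zE; have hr : (0 < r <= delta)%N by rewrite hr1 hr2.
  rewrite big_ord_recr /= subnn eqxx addrC -[RHS](acoef_recurrence hr); congr (_ + _).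
  apply: eq_bigr => i _; have := ltn_ord i => lt_ir.
  by rewrite ifF ?zE //; lia.
split.
- by apply: (recurrence (fun j => zeta j.*2 delta)) => j /zeta_even.
- by apply: (recurrence (fun j => zeta j.*2.-1 delta)) => j /zeta_odd.
Qed.
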